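(* Let $\Omega$ be a countable set, $G$ a closed subgroup of $S=\mathrm{Sym}(\Omega)$, and $\Sigma$ a subset of $\Omega$. Then either (i) there exists a finite set $\Gamma\subseteq\Omega$ such that $G_{(\Gamma)}\le S_{(\Sigma)}$, or (ii) there exists an element $g\in G$ which moves infinitely many members of $\Sigma$.
   Context: $\mathrm{Sym}(\Omega)$ is the group of all permutations of $\Omega$, with the function topology (pointwise convergence, $\Omega$ discrete); ''closed'' means closed in $S$. For $H\le S$ and $\Gamma\subseteq\Omega$, $H_{(\Gamma)}$ is the pointwise stabilizer of $\Gamma$ in $H$. *)

From mathcomp Require Import all_boot.
From mathcomp Require Export classical_sets cardinality.
Set Implicit Arguments. Unset Strict Implicit. Unset Printing Implicit Defensive.
Local Open Scope classical_set_scope.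

Definition Sym (T : Type) : set (T -> T) := [set g | bijective g].

Definition subgroup_Sym (T : Type) (G : set (T -> T)) : Prop :=
  [/\ G `<=` @Sym T, G id,
      (forall g h, G g -> G h -> G (g \o h))
    & (forall g h, G g -> cancel g h -> cancel h g -> G h)].

(* G is closed in Sym(T) for the function topology (pointwise convergence,
   T discrete): every permutation g lying in the closure of G belongs to G,
   where g is in the closure iff every basic neighbourhood
   {h | h agrees with g on A}, A finite, meets G. *)
Definition closed_in_Sym (T : Type) (G : set (T -> T)) : Prop :=
  forall g, @Sym T g ->
    (forall A : set T, finite_set A -> exists2 h, G h & forall x, A x -> h x = g x) ->
    G g.

Definition pstab (T : Type) (H : set (T -> T)) (Gamma : set T) : set (T -> T) :=
  [set g | H g /\ forall x, Gamma x -> g x = x].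

From mathcomp Require Import all_boot classical_sets cardinality boolp.
Set Implicit Arguments. Unset Strict Implicit. Unset Printing Implicit Defensive.
Local Open Scope classical_set_scope.

(* If (i) fails, every pointwise stabiliser of a finite set in G contains an
   element moving a point of Sigma.  Enumerate Omega through [pickle] and build
   g_n in G and distinct points x_0, x_1, ... of Sigma: at stage n choose k in G
   fixing the finite set Gamma_n made of the first n points, their preimages
   under g_n and x_0, ..., x_(n-1), and moving some x_n in Sigma (so x_n is not
   in Gamma_n); put g_(n+1) = g_n if g_n already moves x_n, and g_n k otherwise.
   Then g_(n+1) moves x_0, ..., x_n, while g_(n+1) and its inverse agree with
   g_n and its inverse on the first n points.  Hence the g_n converge to a
   permutation g, which lies in G because G is closed, and g moves every x_n. *)

Definition initial_segment (T : countType) (n : nat) : set T :=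
  [set y | (pickle y < n)%N].

Lemma finite_initial_segment (T : countType) n :
  finite_set (initial_segment n : set T).
Proof.
apply: (@finite_preimage _ _ `I_n pickle) => // x y _ _.
exact: (pcan_inj pickleK).
Qed.

Lemma finite_set_initial_segment (T : countType) (A : set T) :
  finite_set A -> exists n, A `<=` initial_segment n.
Proof.
move=> /finite_seqP[s ->]; exists (\max_(x <- s) (pickle x).+1) => y sy.
exact: (@leq_bigmax_seq _ s xpredT (fun x => (pickle x).+1)).
Qed.

Lemma injective_infinite_set (T : Type) (A : set T) (f : nat -> T) :
  injective f -> (forall n, A (f n)) -> infinite_set A.
Proof.
move=> f_inj Af finA; apply: infinite_nat.
have -> : [set: nat] = f @^-1` A by apply/seteqP; split=> // n _; exact: Af.
by apply: finite_preimage finA => m n _ _; exact: f_inj.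
Qed.

Section Limit.
Variable T : countType.

Definition settles (f : nat -> T -> T) :=
  forall n y, initial_segment n y -> f n.+1 y = f n y.

Definition limit_fun (f : nat -> T -> T) (y : T) := f (pickle y).+1 y.

Lemma settlesE f : settles f ->
  forall n m y, initial_segment n y -> (n <= m)%N -> f m y = f n y.
Proof.
move=> f_settles n m y yn /subnK <-; elim: (m - n)%N => // d IH.
by rewrite addSn f_settles // /initial_segment /= (leq_trans yn) ?leq_addl.
Qed.

Lemma limit_funE f : settles f ->
  forall n y, initial_segment n y -> limit_fun f y = f n y.
Proof.
move=> f_settles n y yn; rewrite /limit_fun.
have [le_Sy_n|lt_n_Sy] := leqP (pickle y).+1 n.
  by rewrite (@settlesE f f_settles (pickle y).+1 n y (ltnSn _) le_Sy_n).
by rewrite (settlesE f_settles yn (ltnW lt_n_Sy)).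
Qed.

Lemma limit_fun_cancel h hi : settles h -> settles hi ->
  (forall n, cancel (h n) (hi n)) -> cancel (limit_fun h) (limit_fun hi).
Proof.
move=> h_settles hi_settles hK y.
pose N := maxn (pickle y).+1 (pickle (limit_fun h y)).+1.
have hN : limit_fun h y = h N y by apply: limit_funE => //; exact: leq_maxl.
rewrite (limit_funE hi_settles (n := N) (y := limit_fun h y)); last first.
  exact: leq_maxr.
by rewrite hN hK.
Qed.

Lemma closed_in_Sym_limit (G : set (T -> T)) h hi :
  closed_in_Sym G -> settles h -> settles hi ->
  (forall n, G (h n)) -> (forall n, cancel (h n) (hi n)) ->
  (forall n, cancel (hi n) (h n)) -> G (limit_fun h).
Proof.
move=> G_closed h_settles hi_settles Gh hK hiK; apply: G_closed.
  by exists (limit_fun hi); apply: limit_fun_cancel.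
move=> A /finite_set_initial_segment[n An]; exists (h n) => // y /An.
by move/(limit_funE h_settles)->.
Qed.

End Limit.

Section Construction.
Variables (T : countType) (G : set (T -> T)) (Sigma : set T).

Record mover := Mover { mover_fun : T -> T; mover_inv : T -> T; mover_pt : T }.

Definition moves_out_of (Gamma : set T) (w : mover) :=
  [/\ G (mover_fun w), cancel (mover_fun w) (mover_inv w),
      cancel (mover_inv w) (mover_fun w), (forall y, Gamma y -> mover_fun w y = y)
    & Sigma (mover_pt w) /\ mover_fun w (mover_pt w) <> mover_pt w].

Lemma exists_mover (Gamma : set T) : G `<=` @Sym T ->
  ~ (pstab G Gamma `<=` pstab (@Sym T) Sigma) -> exists w, moves_out_of Gamma w.
Proof.
move=> GS /existsNP[k /not_implyP[[Gk k_fix] k_notin]].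
have [ki kK kiK] := GS _ Gk.
have /existsNP[x /not_implyP[Sx kx]] : ~ forall x, Sigma x -> k x = x.
  by move=> k_fixS; apply: k_notin; split=> //; exists ki.
by exists (Mover k ki x).
Qed.

Hypotheses (G_id : G id) (G_comp : forall g h, G g -> G h -> G (g \o h)).
Variable pick : set T -> mover.
Hypothesis pickP :
  forall Gamma, finite_set Gamma -> moves_out_of Gamma (pick Gamma).

Record stage := Stage { stage_fun : T -> T; stage_inv : T -> T; marked : seq T }.

Definition stage_ok (s : stage) :=
  [/\ G (stage_fun s), cancel (stage_fun s) (stage_inv s)
    & cancel (stage_inv s) (stage_fun s)].

Definition frozen (n : nat) (s : stage) : set T :=
  initial_segment n `|` stage_inv s @` initial_segment n `|` [set` marked s].

Lemma finite_frozen n s : finite_set (frozen n s).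
Proof.
rewrite /frozen !finite_setU; split; [split|].
- exact: finite_initial_segment.
- exact/finite_image/finite_initial_segment.
- exact: finite_seq.
Qed.

Definition next_stage (n : nat) (s : stage) : stage :=
  let w := pick (frozen n s) in let x := mover_pt w in
  if stage_fun s x != x then Stage (stage_fun s) (stage_inv s) (x :: marked s)
  else Stage (stage_fun s \o mover_fun w) (mover_inv w \o stage_inv s) (x :: marked s).

Section NextStage.
Variables (n : nat) (s : stage).
Let w := pick (frozen n s).
Let x := mover_pt w.

Lemma marked_next_stage : marked (next_stage n s) = x :: marked s.
Proof. by rewrite /next_stage; case: ifP. Qed.

Lemma next_stage_ok : stage_ok s -> stage_ok (next_stage n s).
Proof.
have [Gk kK kiK _ _] := pickP (finite_frozen n s).
move=> [Gh hK hiK]; rewrite /next_stage; case: ifP => _; first by split.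
by split=> [|y|y]; [exact: G_comp | rewrite /= hK kK | rewrite /= kiK hiK].
Qed.

Lemma stage_fun_next_stage y :
  frozen n s y -> stage_fun (next_stage n s) y = stage_fun s y.
Proof.
have [_ _ _ k_fix _] := pickP (finite_frozen n s).
by move=> /k_fix k_y; rewrite /next_stage; case: ifP => //= _; rewrite k_y.
Qed.

Lemma stage_inv_next_stage y :
  initial_segment n y -> stage_inv (next_stage n s) y = stage_inv s y.
Proof.
have [_ kK _ k_fix _] := pickP (finite_frozen n s).
move=> yn; have /k_fix k_hy : frozen n s (stage_inv s y) by left; right; exists y.
by rewrite /next_stage; case: ifP => //= _; rewrite -{1}k_hy kK.
Qed.

Lemma next_stage_moves :
  injective (stage_fun s) -> stage_fun (next_stage n s) x <> x.
Proof.
have [_ _ _ _ [_ kx]] := pickP (finite_frozen n s).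
move=> h_inj; rewrite /next_stage -/w -/x.
case: ifP => [/eqP //|/negbFE/eqP hx] /= hkx.
by apply: kx; apply: h_inj; rewrite hkx hx.
Qed.

End NextStage.

Fixpoint stage_at (n : nat) : stage :=
  if n is m.+1 then next_stage m (stage_at m) else Stage id id [::].

Definition point (n : nat) := mover_pt (pick (frozen n (stage_at n))).

Lemma stage_at_ok n : stage_ok (stage_at n).
Proof. by elim: n => [|n IH]; [split | exact: next_stage_ok]. Qed.

Lemma settles_stage_fun : settles (fun n => stage_fun (stage_at n)).
Proof. by move=> n y yn; apply: stage_fun_next_stage; left; left. Qed.

Lemma settles_stage_inv : settles (fun n => stage_inv (stage_at n)).
Proof. by move=> n y yn; apply: stage_inv_next_stage. Qed.

Lemma Sigma_point n : Sigma (point n).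
Proof. by have [_ _ _ _ []] := pickP (finite_frozen n (stage_at n)). Qed.

Lemma point_not_frozen n : ~ frozen n (stage_at n) (point n).
Proof.
have [_ _ _ k_fix [_ kx]] := pickP (finite_frozen n (stage_at n)).
by move/k_fix/kx.
Qed.

Lemma point_marked n m : (n < m)%N -> point n \in marked (stage_at m).
Proof.
move=> /subnK <-; elim: (m - n.+1)%N => [|d IH].
  by rewrite /= marked_next_stage mem_head.
by rewrite addSn /= marked_next_stage in_cons IH orbT.
Qed.

Lemma point_moved n m : (n < m)%N -> stage_fun (stage_at m) (point n) <> point n.
Proof.
move=> /subnK <-; elim: (m - n.+1)%N => [|d IH] /=.
  by apply: next_stage_moves; have [_ /can_inj] := stage_at_ok n.
rewrite stage_fun_next_stage //; right.
by apply: point_marked; rewrite addnS ltnS leq_addl.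
Qed.

Lemma point_inj : injective point.
Proof.
suff point_neq m n : (m < n)%N -> point m <> point n.
  by move=> m n; case: (ltngtP m n) => // [/point_neq|/point_neq/nesym].
move=> mn mn_eq; apply: (@point_not_frozen n); right.
by rewrite -mn_eq; exact: point_marked.
Qed.

Definition limit_perm := limit_fun (fun n => stage_fun (stage_at n)).

Lemma limit_perm_moves n : limit_perm (point n) <> point n.
Proof.
pose N := maxn (pickle (point n)).+1 n.+1.
rewrite /limit_perm (limit_funE settles_stage_fun (n := N)).
  by apply: point_moved; rewrite leq_max ltnSn orbT.
exact: leq_maxl.
Qed.

Lemma closed_limit_perm : closed_in_Sym G -> G limit_perm.
Proof.
move=> G_closed.
apply: (closed_in_Sym_limit G_closed settles_stage_fun settles_stage_inv) => n;
  by have [] := stage_at_ok n.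
Qed.

End Construction.

Theorem corollary11p3 (Omega : countType) (G : set (Omega -> Omega))
  (Sigma : set Omega) :
  subgroup_Sym G -> closed_in_Sym G ->
  (exists Gamma : set Omega, finite_set Gamma /\ pstab G Gamma `<=` pstab (@Sym Omega) Sigma)
  \/ (exists2 g, G g & infinite_set [set x | Sigma x /\ g x <> x]).
Proof.
move=> [GS G_id G_comp _] G_closed.
case: (EM (exists Gamma : set Omega,
  finite_set Gamma /\ pstab G Gamma `<=` pstab (@Sym Omega) Sigma)) => [|no_Gamma].
  by left.
right.
have movers Gamma : finite_set Gamma -> exists w, moves_out_of G Sigma Gamma w.
  by move=> finG; apply: exists_mover => // sub; apply: no_Gamma; exists Gamma.
have [w0 _] := movers set0 (finite_set0 _).
have /choice[pick pickP] Gamma :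
    exists w, finite_set Gamma -> moves_out_of G Sigma Gamma w.
  have [/movers[w w_ok]|infG] := EM (finite_set Gamma); first by exists w.
  by exists w0 => /infG.
exists (limit_perm pick); first exact: (closed_limit_perm G_id G_comp pickP).
apply: (injective_infinite_set (point_inj pickP)) => n.
split; first exact: (Sigma_point pickP).
exact: (limit_perm_moves G_id G_comp pickP).
Qed.
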